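(* Let $n\ge 1$ and $N>n$ be integers, let $\lambda>0$, $\beta\in(0,1)$, and let $\tilde b_0\neq 0$ be a real number. Let $\hat\Sigma\in\mathbb{R}^{(n+1)\times(n+1)}$ be a symmetric positive definite Toeplitz matrix, $[\hat\Sigma]_{ts}=\hat r_{|t-s|}$ for $t,s=1,\dots,n+1$. Let $K_{DI}=\mathrm{diag}(\beta,\beta^2,\dots,\beta^{n+1})$ and $v=[1,0,\dots,0]^T\in\mathbb{R}^{n+1}$, and define $$\hat{\mathbf b}_{ML}=[\hat b_0,\hat b_1,\dots,\hat b_n]^T=\tilde b_0^{-1}\left(\hat\Sigma+((N-n)\lambda K_{DI})^{-1}\right)^{-1}v .$$ If the polynomial $\hat b_{ML}(z)=\sum_{k=0}^n \hat b_k z^{-k}$ is not identically zero, then all its zeros lie strictly inside the unit circle, i.e. every (complex) root $\breve z$ of $\hat b_0 z^n+\hat b_1 z^{n-1}+\dots+\hat b_n$ satisfies $|\breve z|<1$.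
   Context: This is the regularized (kernel-based) maximum entropy estimate of the coefficients of a high-order AR model $b(z)y_t=e_t$ with a Gaussian prior $\mathbf b\sim\mathcal N(0,\lambda K_{DI})$ (''diagonal kernel''). In the paper, $\hat r_k=\frac1N\sum_{t=1}^{N-k}y_ty_{t+k}$ are sample covariance lags of data $y_1,\dots,y_N$ and $\tilde b_0$ is a preliminary estimate of $b_0$; for the claim only the stated properties of $\hat\Sigma$ and $\tilde b_0$ are needed. *)

From HB Require Import structures.
From mathcomp Require Import all_boot all_order all_algebra.
From mathcomp Require Import complex.
Set Implicit Arguments. Unset Strict Implicit. Unset Printing Implicit Defensive.
Import Order.TTheory GRing.Theory Num.Theory.
Local Open Scope ring_scope.

Definition posdef (R : numDomainType) (m : nat) (A : 'M[R]_m) : Prop :=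
  A^T = A /\ forall x : 'cV[R]_m, x != 0 -> 0 < (x^T *m A *m x) 0 0.

Definition toeplitz (R : ringType) (m : nat) (A : 'M[R]_m) : Prop :=
  exists r : nat -> R, forall i j : 'I_m, A i j = r `|(i : nat) - (j : nat)|%N.

Definition K_DI (R : ringType) (n : nat) (beta : R) : 'M[R]_n.+1 :=
  diag_mx (\row_(i < n.+1) beta ^+ i.+1).

Definition e0 (R : ringType) (n : nat) : 'cV[R]_n.+1 :=
  \col_(i < n.+1) (i == ord0)%:R.

Definition bML (R : fieldType) (n N : nat) (lambda beta b0t : R)
  (Sigma : 'M[R]_n.+1) : 'cV[R]_n.+1 :=
  b0t^-1 *: (invmx (Sigma + invmx (((N - n)%:R * lambda) *: K_DI n beta)) *m e0 R n).

Definition bpoly (R : ringType) (n : nat) (b : 'cV[R]_n.+1) : {poly R} :=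
  \sum_(k < n.+1) b k 0 *: 'X^(n - k).

From HB Require Import structures.
From mathcomp Require Import all_boot all_order all_algebra.
From mathcomp Require Import complex.
From mathcomp Require Import ring zify.
Set Implicit Arguments. Unset Strict Implicit. Unset Printing Implicit Defensive.
Import Order.TTheory GRing.Theory Num.Theory.
Local Open Scope ring_scope.
Local Open Scope complex_scope.

(* Write D = ((N-n) lambda K_DI)^-1 = diag(d_0, ..., d_n) with
   d_k = ((N-n) lambda beta^(k+1))^-1, a strictly increasing sequence since
   0 < beta < 1, and A = Sigma + D (symmetric positive definite).  Then
   b = b_ML solves A b = b0t^-1 e_0.  If z is a root of
   p(X) = b_0 X^n + ... + b_n, factor p = q (X - z) with deg q < n and read
   the coefficients backwards: w_k = q_(n-k) and u_k = (qX)_(n-k), so that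
   b = u - z w, w_0 = u_n = 0 and u_k = w_(k+1) (u is w shifted up).
   For the Hermitian form <x, y> = x^* A y:
   - <w, b> = <b, w> = 0 because A b is proportional to e_0 and w_0 = 0,
     hence <u, u> = <b, b> + |z|^2 <w, w>;
   - the Toeplitz part does not see the shift, <u,u>_Sigma = <w,w>_Sigma,
     while the increasing diagonal gives <u,u>_D < <w,w>_D;
   so |z|^2 <w, w> <= <u, u> < <w, w> with <w, w> > 0, i.e. |z| < 1.
   The file develops the Hermitian form of a real symmetric matrix, the
   shift argument (lemma [shift_root_in_disc]), the facts about the kernel
   estimator and about reversed coefficient vectors of polynomials, and
   finally derives [proposition1]. *)

Section HermitianForm.
Variables (R : rcfType) (m : nat) (A : 'M[R]_m).
Local Notation C := R[i].

Definition hform (x y : 'cV[C]_m) : C :=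
  \sum_i \sum_j (x i 0)^* * (A i j)%:C * y j 0.

Definition cvC (y : 'cV[R]_m) : 'cV[C]_m := map_mx (real_complex R) y.

Lemma hform_expand (x y : 'cV[C]_m) (a : C) :
  hform (x + a *: y) (x + a *: y) =
  hform x x + a * hform x y + a^* * hform y x + a^* * a * hform y y.
Proof.
rewrite /hform !mulr_sumr -!big_split /=; apply: eq_bigr => i _.
rewrite !mulr_sumr -!big_split /=; apply: eq_bigr => j _.
rewrite !mxE rmorphD rmorphM; ring.
Qed.

Lemma hformC : A^T = A -> forall x y, hform y x = (hform x y)^*.
Proof.
move=> Asym x y; rewrite /hform rmorph_sum exchange_big /=.
apply: eq_bigr => j _; rewrite rmorph_sum; apply: eq_bigr => i _.
have Aji : A j i = A i j by rewrite -{1}Asym mxE.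
rewrite Aji; case: (x j 0) => a b; case: (y i 0) => c d.
by apply/eqP; rewrite eq_complex /=; apply/andP; split; apply/eqP; ring.
Qed.

Lemma hform_real (y z : 'cV[R]_m) :
  hform (cvC y) (cvC z) = ((y^T *m A *m z) 0 0)%:C.
Proof.
rewrite mxE rmorph_sum /hform exchange_big /=; apply: eq_bigr => j _.
rewrite !mxE mulr_suml rmorph_sum; apply: eq_bigr => i _.
rewrite !mxE; apply/eqP; rewrite eq_complex /=.
by apply/andP; split; apply/eqP; ring.
Qed.

Lemma qformC (y z : 'cV[R]_m) : A^T = A ->
  (y^T *m A *m z) 0 0 = (z^T *m A *m y) 0 0.
Proof.
move=> Asym.
have -> : (y^T *m A *m z) 0 0 = ((y^T *m A *m z)^T) 0 0 by rewrite [RHS]mxE.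
by rewrite !trmx_mul trmxK Asym mulmxA.
Qed.

Hypothesis A_posdef : posdef A.

Lemma qform_ge0 (y : 'cV[R]_m) : 0 <= (y^T *m A *m y) 0 0.
Proof.
have [->|y0] := eqVneq y 0; first by rewrite mulmx0 mxE.
by case: A_posdef => _ /(_ y y0) /ltW.
Qed.

(* Positive definiteness carries over to complex vectors: with x = a + i b,
   <x, x> = a^T A a + b^T A b, the cross terms cancelling by symmetry. *)
Lemma hform_gt0 (x : 'cV[C]_m) : x != 0 -> 0 < hform x x.
Proof.
move=> x0; set a := map_mx (@complex.Re R) x; set b := map_mx (@complex.Im R) x.
have xE : x = cvC a + 'i *: cvC b.
  apply/matrixP => i j; rewrite !mxE; case: (x i j) => r s.
  by apply/eqP; rewrite eq_complex /=; apply/andP; split; apply/eqP; ring.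
have iJ : Num.conj ('i : C) = - 'i by apply/eqP; rewrite eq_complex /= oppr0 !eqxx.
have iJi : - 'i * 'i = 1 :> C.
  by apply/eqP; rewrite eq_complex /=; apply/andP; split; apply/eqP; ring.
rewrite xE hform_expand !hform_real (qformC b a (proj1 A_posdef)) iJ iJi mulNr addrK.
rewrite mul1r -rmorphD ltcE /= eqxx /=.
have [_ qpos] := A_posdef.
have [a0|a0] := eqVneq a 0; last exact: ltr_wpDr (qform_ge0 b) (qpos a a0).
have b0 : b != 0.
  by apply: contraNneq x0 => b0; rewrite xE a0 b0 /cvC map_mx0 scaler0 addr0.
exact: ltr_wpDl (qform_ge0 a) (qpos b b0).
Qed.

Lemma hform_ge0 (x : 'cV[C]_m) : 0 <= hform x x.
Proof.
have [->|x0] := eqVneq x 0; last exact/ltW/hform_gt0.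
by rewrite /hform big1 // => i _; rewrite big1 // => j _; rewrite !mxE mulr0.
Qed.

End HermitianForm.

Section HermitianFormSplitting.
Variables (R : rcfType) (m : nat).
Local Notation C := R[i].

Lemma hform_add_diag (T : 'M[R]_m) (d : 'I_m -> R) (x : 'cV[C]_m) :
  hform (T + diag_mx (\row_i d i)) x x =
  hform T x x + \sum_i (d i)%:C * ((x i 0)^* * x i 0).
Proof.
rewrite /hform -big_split; apply: eq_bigr => i _ /=.
rewrite (bigD1 i) //= [X in _ = X + _](bigD1 i) //=.
rewrite (eq_bigr (fun j => (x i 0)^* * (T i j)%:C * x j 0)); last first.
  by move=> j ji; rewrite !mxE eq_sym (negbTE ji) mulr0n addr0.
rewrite !mxE eqxx mulr1n rmorphD; ring.
Qed.

Lemma hform_orth_e0 (B : 'M[R]_m.+1) (c : R) (x : 'cV[C]_m.+1) (y : 'cV[R]_m.+1) :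
  B *m y = c *: e0 R m -> x ord0 0 = 0 -> hform B x (cvC y) = 0.
Proof.
move=> By x0; rewrite /hform (bigD1 ord0) //= big1 => [|j _]; last first.
  by rewrite x0 rmorph0 !mul0r.
rewrite add0r big1 // => i i0.
have := congr1 (fun M : 'cV_m.+1 => M i 0) By; rewrite !mxE (negbTE i0) mulr0 => Bi.
transitivity ((x i 0)^* * (\sum_j B i j * y j 0)%:C); last by rewrite Bi rmorph0 mulr0.
rewrite rmorph_sum mulr_sumr.
by apply: eq_bigr => j _; rewrite !mxE rmorphM mulrA.
Qed.

End HermitianFormSplitting.

Lemma distnSS (i j : nat) : `|(i.+1 : int) - j.+1|%N = `|(i : int) - j|%N.
Proof. by rewrite !intS; congr absz; ring. Qed.

(* [shifted u w]: w is u moved one place down, w = (0, u_0, ..., u_(m-1)),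
   and the last coordinate u_m vanishes. *)
Definition shifted (V : nmodType) (m : nat) (u w : 'cV[V]_m.+1) : Prop :=
  [/\ u ord_max 0 = 0, w ord0 0 = 0 &
      forall i : 'I_m, u (widen_ord (leqnSn m) i) 0 = w (lift ord0 i) 0].

Section ShiftedVectors.
Variables (R : rcfType) (m : nat).
Local Notation C := R[i].
Variables (u w : 'cV[C]_m.+1).
Hypothesis uw : shifted u w.

Lemma hform_toeplitz_shift (T : 'M[R]_m.+1) :
  toeplitz T -> hform T u u = hform T w w.
Proof.
case=> r Tr; case: uw => umax w0 uwE; rewrite /hform.
rewrite big_ord_recr /= [X in _ + X]big1 ?addr0 => [|j _]; last first.
  by rewrite umax rmorph0 !mul0r.
rewrite big_ord_recl /= [X in X + _]big1 ?add0r => [|j _]; last first.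
  by rewrite w0 rmorph0 !mul0r.
apply: eq_bigr => i _.
rewrite big_ord_recr /= umax mulr0 addr0 big_ord_recl /= w0 mulr0 add0r.
apply: eq_bigr => j _.
by rewrite !uwE !Tr /= /bump !add1n distnSS.
Qed.

Lemma diag_shift_lt (d : 'I_m.+1 -> R) :
  (forall i : 'I_m, d (widen_ord (leqnSn m) i) < d (lift ord0 i)) -> w != 0 ->
  \sum_i (d i)%:C * ((u i 0)^* * u i 0) < \sum_i (d i)%:C * ((w i 0)^* * w i 0).
Proof.
move=> d_incr /matrix0Pn [k [j wk]]; case: uw => umax w0 uwE.
rewrite ord1 in wk.
have [i0 wi0] : exists i : 'I_m, w (lift ord0 i) 0 != 0.
  by case: (unliftP ord0 k) wk => [i ->|->]; [exists i | rewrite w0 eqxx].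
have norm2_ge0 (x : C) : 0 <= x^* * x by rewrite mulrC mul_conjC_ge0.
rewrite big_ord_recr /= umax !mulr0 addr0 big_ord_recl /= w0 !mulr0 add0r.
rewrite -subr_gt0 -sumrB (bigD1 i0) //= uwE -mulrBl -rmorphB.
apply: ltr_wpDr.
  apply: sumr_ge0 => i _; rewrite uwE -mulrBl -rmorphB.
  by rewrite mulr_ge0 // ler0c subr_ge0 ltW.
rewrite mulr_gt0 ?ltcR ?subr_gt0 // lt0r norm2_ge0 andbT.
by rewrite mulf_neq0 // fmorph_eq0.
Qed.

End ShiftedVectors.

Section Stability.
Variables (R : rcfType) (m : nat) (T : 'M[R]_m.+1) (d : 'I_m.+1 -> R).
Local Notation C := R[i].
Local Notation A := (T + diag_mx (\row_i d i)).
Hypotheses (T_toeplitz : toeplitz T) (A_posdef : posdef A)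
  (d_incr : forall i : 'I_m, d (widen_ord (leqnSn m) i) < d (lift ord0 i)).

Lemma shift_root_in_disc (b : 'cV[R]_m.+1) (c : R) (u w : 'cV[C]_m.+1) (z : C) :
  A *m b = c *: e0 R m -> cvC b = u - z *: w -> shifted u w -> w != 0 ->
  `|z| < 1.
Proof.
move=> Ab bE uw w_nz; have [_ w0 _] := uw.
have orth_wb : hform A w (cvC b) = 0 := hform_orth_e0 Ab w0.
have orth_bw : hform A (cvC b) w = 0.
  by rewrite (hformC (proj1 A_posdef)) orth_wb rmorph0.
have energy : hform A u u = hform A (cvC b) (cvC b) + `|z| ^+ 2 * hform A w w.
  rewrite -[u](subrK (z *: w)) -bE hform_expand orth_wb orth_bw.
  by rewrite !mulr0 !addr0 [z^* * z]mulrC -normCK.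
have decrease : hform A u u < hform A w w.
  rewrite !hform_add_diag (hform_toeplitz_shift uw T_toeplitz) ltrD2l.
  exact: diag_shift_lt.
have w_pos : 0 < hform A w w := hform_gt0 A_posdef w_nz.
rewrite real_ltNge ?normr_real ?real1 //; apply/negP => z_ge1.
suff : hform A w w < hform A w w by rewrite ltxx.
apply: le_lt_trans decrease; rewrite energy.
apply: le_trans (ler_peMl (ltW w_pos) (exprn_ege1 2 z_ge1)) _.
exact: ler_wpDl (hform_ge0 A_posdef _) (lexx _).
Qed.

End Stability.

Section MatrixFacts.

Lemma invmx_diag (F : fieldType) (k : nat) (r : 'rV[F]_k) :
  (forall i, r 0 i != 0) -> invmx (diag_mx r) = diag_mx (\row_i (r 0 i)^-1).
Proof.
move=> r_nz.
have left_inv : diag_mx (\row_i (r 0 i)^-1) *m diag_mx r = 1%:M.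
  apply/matrixP => i j; rewrite mul_diag_mx !mxE.
  by have [->|ij] := eqVneq i j; rewrite ?mulVf ?mulr0n ?mulr0.
have [_ r_unit] := mulmx1_unit left_inv.
by rewrite -[LHS]mul1mx -left_inv mulmxK.
Qed.

Lemma posdef_unit (F : numFieldType) (k : nat) (A : 'M[F]_k) :
  posdef A -> A \in unitmx.
Proof.
case=> _ A_pos; rewrite unitmxE unitfE; apply/negP => /det0P [v v_nz vA].
have := A_pos v^T; rewrite trmx_eq0 trmxK vA mul0mx mxE ltxx.
by move/(_ v_nz).
Qed.

Lemma posdef_add_diag (F : realFieldType) (k : nat) (S : 'M[F]_k) (d : 'I_k -> F) :
  posdef S -> (forall i, 0 <= d i) -> posdef (S + diag_mx (\row_i d i)).
Proof.
case=> S_sym S_pos d_ge0; split; first by rewrite linearD /= tr_diag_mx S_sym.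
move=> x x_nz; rewrite mulmxDr mulmxDl mxE ltr_wpDr ?S_pos //.
rewrite mul_mx_diag mxE; apply: sumr_ge0 => i _.
by rewrite !mxE mulrAC -expr2 mulr_ge0 ?sqr_ge0.
Qed.

End MatrixFacts.

Section KernelEstimator.
Variables (F : fieldType) (n N : nat) (lambda beta b0t : F) (Sigma : 'M[F]_n.+1).

Lemma invmx_scaled_K_DI (s : F) : s != 0 -> beta != 0 ->
  invmx (s *: K_DI n beta) = diag_mx (\row_(i < n.+1) (s * beta ^+ i.+1)^-1).
Proof.
move=> s_nz beta_nz.
have -> : s *: K_DI n beta = diag_mx (\row_(i < n.+1) (s * beta ^+ i.+1)).
  by apply/matrixP => i j; rewrite /K_DI !mxE mulrnAr.
rewrite invmx_diag => [|i]; first by apply/matrixP => i j; rewrite !mxE.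
by rewrite mxE mulf_neq0 ?expf_neq0.
Qed.

Lemma bML_normal_eq :
  let A := Sigma + invmx (((N - n)%:R * lambda) *: K_DI n beta) in
  A \in unitmx -> A *m bML N lambda beta b0t Sigma = b0t^-1 *: e0 F n.
Proof. by move=> A A_unit; rewrite /bML -scalemxAr mulmxA mulmxV // mul1mx. Qed.

End KernelEstimator.

Lemma kernel_weight_lt (F : realFieldType) (s beta : F) (k : nat) :
  0 < s -> 0 < beta -> beta < 1 -> (s * beta ^+ k.+1)^-1 < (s * beta ^+ k.+2)^-1.
Proof.
move=> s_gt0 beta_gt0 beta_lt1.
have pow_gt0 j : 0 < beta ^+ j := exprn_gt0 j beta_gt0.
have weight_gt0 j : 0 < s * beta ^+ j by rewrite mulr_gt0.
by rewrite ltf_pV2 ?posrE // ltr_pM2l // [X in X < _]exprS gtr_pMl.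
Qed.

Section ReversedCoefficients.
Variables (R : nzRingType) (n : nat).

Definition revcoef (p : {poly R}) : 'cV[R]_n.+1 := \col_(k < n.+1) p`_(n - k).

Lemma revcoef_bpoly (b : 'cV[R]_n.+1) : revcoef (bpoly b) = b.
Proof.
apply/matrixP => k j; rewrite ord1 mxE /bpoly coef_sum (bigD1 k) //=.
rewrite coefZ coefXn eqxx mulr1 big1 ?addr0 // => k' k'k.
rewrite coefZ coefXn; suff -> : (n - k == n - k')%N = false by rewrite mulr0.
apply/negbTE; apply: contra k'k => /eqP sub_eq; apply/eqP/val_inj => /=.
by have := ltn_ord k; have := ltn_ord k'; lia.
Qed.

Lemma size_bpoly (b : 'cV[R]_n.+1) : (size (bpoly b) <= n.+1)%N.
Proof.
apply/leq_sizeP => j j_gt; rewrite /bpoly coef_sum big1 // => k _.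
by rewrite coefZ coefXn gtn_eqF ?mulr0 // (leq_ltn_trans (leq_subr k n)).
Qed.

Lemma revcoef_eq0 (p : {poly R}) : (size p <= n.+1)%N -> revcoef p = 0 -> p = 0.
Proof.
move=> size_p p0; apply/polyP => j; rewrite coef0.
have [j_le|j_gt] := leqP j n; last exact/(leq_sizeP _ _ size_p).
have k_lt : (n - j < n.+1)%N by rewrite ltnS leq_subr.
have := congr1 (fun M : 'cV_n.+1 => M (Ordinal k_lt) 0) p0.
by rewrite !mxE subKn.
Qed.

Lemma revcoef_shifted (q : {poly R}) :
  (size q <= n)%N -> shifted (revcoef (q * 'X)) (revcoef q).
Proof.
move=> size_q; split=> [|| i]; rewrite !mxE.
- by rewrite subnn coefMX.
- by rewrite subn0 (leq_sizeP _ _ size_q).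
- by rewrite coefMX subn_eq0 /= leqNgt ltn_ord /bump add1n subnS /=.
Qed.

End ReversedCoefficients.

Lemma revcoef_map (R S : nzRingType) (n : nat) (f : R -> S) (p : {poly R}) :
  f 0 = 0 -> revcoef n (map_poly f p) = map_mx f (revcoef n p).
Proof. by move=> f0; apply/matrixP => k j; rewrite !mxE coef_map_id0. Qed.

Lemma revcoef_factor (R : comNzRingType) (n : nat) (q : {poly R}) (a : R) :
  revcoef n (q * ('X - a%:P)) = revcoef n (q * 'X) - a *: revcoef n q.
Proof. by apply/matrixP => k j; rewrite !mxE mulrBr coefB coefMC [_ * a]mulrC. Qed.

Theorem proposition1 (R : rcfType) (n N : nat) (lambda beta b0t : R)
  (Sigma : 'M[R]_n.+1) :
  (1 <= n)%N -> (n < N)%N -> 0 < lambda -> 0 < beta -> beta < 1 ->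
  b0t != 0 -> posdef Sigma -> toeplitz Sigma ->
  bpoly (bML N lambda beta b0t Sigma) != 0 ->
  forall z : R[i],
    root (map_poly (fun x : R => x%:C) (bpoly (bML N lambda beta b0t Sigma))) z ->
    `|z| < 1.
Proof.
move=> _ nN lambda_gt0 beta_gt0 beta_lt1 _ Sigma_pd Sigma_toep p_nz z root_z.
set b := bML N lambda beta b0t Sigma in p_nz root_z *.
set s := (N - n)%:R * lambda.
have s_gt0 : 0 < s by rewrite mulr_gt0 // ltr0n subn_gt0.
pose d (i : 'I_n.+1) := (s * beta ^+ i.+1)^-1.
have kernelE : invmx (s *: K_DI n beta) = diag_mx (\row_i d i).
  by rewrite invmx_scaled_K_DI ?lt0r_neq0.
have A_pd : posdef (Sigma + diag_mx (\row_i d i)).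
  by apply: posdef_add_diag => // i; rewrite ltW // invr_gt0 mulr_gt0 ?exprn_gt0.
have Ab : (Sigma + diag_mx (\row_i d i)) *m b = b0t^-1 *: e0 R n.
  by rewrite -kernelE bML_normal_eq // kernelE posdef_unit.
have [q pE] := factor_theorem _ _ root_z.
have q_nz : q != 0.
  by apply: contraNneq p_nz => q0; rewrite -(map_poly_eq0 (real_complex R)) pE q0 mul0r.
have size_q : (size q <= n)%N.
  have := size_bpoly b; rewrite -(size_map_poly (real_complex R)) pE.
  by rewrite size_Mmonic ?monicXsubC // size_XsubC addn2.
apply: (shift_root_in_disc Sigma_toep A_pd _ Ab
  (u := revcoef n (q * 'X)) (w := revcoef n q)).
- by move=> i; apply: kernel_weight_lt.
- by rewrite -[b in cvC b]revcoef_bpoly /cvC -revcoef_map ?rmorph0 // pE revcoef_factor.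
- exact: revcoef_shifted.
- by apply: contra q_nz => /eqP/revcoef_eq0 -> //; rewrite (leq_trans size_q).
Qed.
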